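(* For $d\le3$, $E>0$ and $\epsilon\in(0,1]$ there exists a constant $K_{d,\epsilon,E}$, with $E\mapsto K_{d,\epsilon,E}$ bounded on compact subsets of $(0,\infty)$, such that for $\sigma\in\{0,1\}$, $\eta>0$, $q\in\mathbb R^d$ and either choice of sign, $$\sup_{v_1,v_2\in\mathbb R^d}\prod_{j=1}^d\big\{\langle v_{1,j}\rangle^{-1+\epsilon}\langle v_{2,j}\rangle^{-1+\epsilon}\big\}\,|\nu(q+v_1)-E\pm i\eta|^{-1}\,|\nu(q+\sigma v_1+v_2)-E\pm i\eta|^{-1}\le K_{d,\epsilon,E}(1+\eta^{-2})\prod_{j=1}^d\langle q_j\rangle^{-1+\epsilon}.$$
   Context: $\nu(p)=\frac12|p|^2$ for $p\in\mathbb R^d$; for real $t$, $\langle t\rangle=(1+t^2)^{1/2}$; $v_{i,j}$ and $q_j$ denote coordinates. *)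

From Stdlib Require Import Reals.
From Coquelicot Require Import Coquelicot.
Open Scope R_scope.

(* vectors in R^d are functions nat -> R, coordinates 0..d-1 *)
Fixpoint sumR (n : nat) (f : nat -> R) : R :=
  match n with O => 0 | S m => sumR m f + f m end.
Fixpoint prodR (n : nat) (f : nat -> R) : R :=
  match n with O => 1 | S m => prodR m f * f m end.

Definition nu (d : nat) (p : nat -> R) : R := / 2 * sumR d (fun j => (p j) ^ 2).

Definition jbr (t : R) : R := sqrt (1 + t ^ 2).

Definition shiftC (x E eta : R) (s : bool) : C :=
  (RtoC x - RtoC E + (if s then RtoC eta * Ci else - (RtoC eta * Ci)))%C.

Definition vadd (u v : nat -> R) : nat -> R := fun j => u j + v j.
Definition vsig (sigma : bool) (v : nat -> R) : nat -> R :=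
  fun j => if sigma then v j else 0.

From Stdlib Require Import Reals Lra Psatz.
From Coquelicot Require Import Coquelicot.
Open Scope R_scope.

(* Put [a = (1 - eps) / 2], so that the weight [<t>^(-1+eps)] is [<t>^(-2a)].
   In each coordinate, Peetre's inequality [<x> <= 2 <x + y> <y>], applied to
   [q = (q + v1) - v1] and to [q = (q + sigma v1 + v2) - sigma v1 - v2], gives
   [<v1>^(-2a) <v2>^(-2a) <= 8 <q + v1>^a <q + sigma v1 + v2>^a <q>^(-2a)].
   As [a d <= 2], the product over the coordinates of [<p_j>^a] is at most
   [1 + |p|^2 = 1 + 2 nu(p)], and [(1 + 2 nu(p)) / |nu(p) - E +- i eta|] is at
   most [(3 + 2E)(1 + 1/eta)] because the denominator dominates both [eta] and
   [|nu(p) - E|]. *)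

Lemma sumR_nonneg n f : (forall j, 0 <= f j) -> 0 <= sumR n f.
Proof.
  intros Hf. induction n as [|n IH]; simpl; [lra |].
  pose proof (Hf n). lra.
Qed.

Lemma sumR_ge_term n f j : (forall k, 0 <= f k) -> (j < n)%nat -> f j <= sumR n f.
Proof.
  intros Hf Hj. induction n as [|n IH]; simpl; [lia |].
  pose proof (sumR_nonneg n f Hf). pose proof (Hf n).
  destruct (Nat.eq_dec j n) as [-> | Hne]; [lra |].
  assert (f j <= sumR n f) by (apply IH; lia). lra.
Qed.

Lemma prodR_nonneg n f : (forall j, (j < n)%nat -> 0 <= f j) -> 0 <= prodR n f.
Proof.
  intros Hf. induction n as [|n IH]; simpl; [lra |].
  apply Rmult_le_pos; [apply IH; intros j Hj |]; apply Hf; lia.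
Qed.

Lemma prodR_le n f g :
  (forall j, (j < n)%nat -> 0 <= f j <= g j) -> prodR n f <= prodR n g.
Proof.
  intros Hfg. induction n as [|n IH]; simpl; [lra |].
  assert (Hn : 0 <= f n <= g n) by (apply Hfg; lia).
  assert (Hprod : prodR n f <= prodR n g) by (apply IH; intros j Hj; apply Hfg; lia).
  assert (0 <= prodR n f)
    by (apply prodR_nonneg; intros j Hj; apply Hfg; lia).
  apply Rmult_le_compat; lra.
Qed.

Lemma prodR_mul n f g : prodR n (fun j => f j * g j) = prodR n f * prodR n g.
Proof. induction n as [|n IH]; simpl; [ring | rewrite IH; ring]. Qed.

Lemma prodR_const n c : prodR n (fun _ => c) = c ^ n.
Proof. induction n as [|n IH]; simpl; [ring | rewrite IH; ring]. Qed.

Lemma Cmod_shiftC_ge x E eta s : 0 < eta ->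
  eta <= Cmod (shiftC x E eta s) /\ Rabs (x - E) <= Cmod (shiftC x E eta s).
Proof.
  intros Heta.
  pose proof (Rmax_Cmod (shiftC x E eta s)) as Hmax.
  assert (Hre : fst (shiftC x E eta s) = x - E)
    by (unfold shiftC; destruct s; simpl; ring).
  assert (Him : Rabs (snd (shiftC x E eta s)) = eta).
  { unfold shiftC; destruct s; simpl.
    - rewrite Rabs_pos_eq; lra.
    - rewrite Rabs_left; lra. }
  rewrite Hre, Him in Hmax.
  split; eapply Rle_trans; [apply Rmax_r | exact Hmax | apply Rmax_l | exact Hmax].
Qed.

Lemma Rinv_Cmod_shiftC_pos x E eta s : 0 < eta -> 0 < / Cmod (shiftC x E eta s).
Proof.
  intros Heta. destruct (Cmod_shiftC_ge x E eta s Heta) as [Hc _].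
  apply Rinv_0_lt_compat. lra.
Qed.

Lemma resolvent_le x E eta s : 0 <= 1 + 2 * E -> 0 < eta ->
  (1 + 2 * x) * / Cmod (shiftC x E eta s) <= (3 + 2 * E) * (1 + / eta).
Proof.
  intros HE Heta.
  destruct (Cmod_shiftC_ge x E eta s Heta) as [Hc_eta Hc_dist].
  set (c := Cmod (shiftC x E eta s)) in *.
  assert (Hdist : x - E <= c) by (eapply Rle_trans; [apply Rle_abs | exact Hc_dist]).
  assert (Hc_inv : / c <= / eta) by (apply Rinv_le_contravar; lra).
  assert (Hc_pos : 0 < / c) by (apply Rinv_0_lt_compat; lra).
  assert (Hc_one : c * / c = 1) by (field; lra).
  assert (Heta_pos : 0 < / eta) by (apply Rinv_0_lt_compat; lra).
  apply Rle_trans with ((1 + 2 * E) * / c + 2 * (c * / c)); [nra |].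
  rewrite Hc_one. nra.
Qed.

Lemma jbr_ge1 x : 1 <= jbr x.
Proof.
  unfold jbr. rewrite <- sqrt_1 at 1.
  apply sqrt_le_1_alt. pose proof (pow2_ge_0 x). lra.
Qed.

Lemma jbr_sqr x : jbr x ^ 2 = 1 + x ^ 2.
Proof. unfold jbr. apply pow2_sqrt. pose proof (pow2_ge_0 x). lra. Qed.

Lemma jbr_opp x : jbr (- x) = jbr x.
Proof. unfold jbr. f_equal. ring. Qed.

Lemma jbr_0 : jbr 0 = 1.
Proof. unfold jbr. replace (1 + 0 ^ 2) with 1 by ring. apply sqrt_1. Qed.

Lemma jbr_peetre x y : jbr x <= 2 * jbr (x + y) * jbr y.
Proof.
  pose proof (jbr_ge1 (x + y)). pose proof (jbr_ge1 y).
  apply Rsqr_incr_0_var; [unfold Rsqr | nra].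
  replace ((2 * jbr (x + y) * jbr y) * (2 * jbr (x + y) * jbr y))
    with (4 * jbr (x + y) ^ 2 * jbr y ^ 2) by ring.
  replace (jbr x * jbr x) with (jbr x ^ 2) by ring.
  rewrite !jbr_sqr.
  pose proof (pow2_ge_0 (x + 2 * y)). pose proof (pow2_ge_0 ((x + y) * y)). nra.
Qed.

Definition jpow (a x : R) : R := Rpower (jbr x) a.

Lemma jpow_pos a x : 0 < jpow a x.
Proof. apply exp_pos. Qed.

Lemma jpow_ge1 a x : 0 <= a -> 1 <= jpow a x.
Proof.
  intros Ha. pose proof (jbr_ge1 x). unfold jpow.
  rewrite <- (Rpower_O (jbr x)) by lra.
  apply Rle_Rpower; lra.
Qed.

Lemma jpow_opp a x : jpow a (- x) = jpow a x.
Proof. unfold jpow. rewrite jbr_opp. reflexivity. Qed.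

Lemma jpow_0 a : jpow a 0 = 1.
Proof. unfold jpow, Rpower. rewrite jbr_0, ln_1, Rmult_0_r. apply exp_0. Qed.

Lemma Rpower_jbr_neg a x : Rpower (jbr x) (- (2 * a)) = / jpow a x ^ 2.
Proof.
  rewrite Rpower_Ropp. unfold jpow.
  replace (2 * a) with (a + a) by ring.
  rewrite Rpower_plus. f_equal. ring.
Qed.

Lemma jpow_peetre a x y : 0 <= a <= 1 -> jpow a x <= 2 * jpow a (x + y) * jpow a y.
Proof.
  intros Ha. unfold jpow.
  pose proof (jbr_ge1 x). pose proof (jbr_ge1 y). pose proof (jbr_ge1 (x + y)).
  apply Rle_trans with (Rpower (2 * jbr (x + y) * jbr y) a).
  { apply Rle_Rpower_l; [lra | split; [lra | apply jbr_peetre]]. }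
  rewrite <- !Rpower_mult_distr by lra.
  do 2 (apply Rmult_le_compat_r; [left; apply exp_pos |]).
  rewrite <- (Rpower_1 2) at 2 by lra. apply Rle_Rpower; lra.
Qed.

Lemma jpow_sqr_coord_le a q v1 v2 (sigma : bool) : 0 <= a <= 1 ->
  jpow a q ^ 2 <=
  8 * jpow a (q + v1) * jpow a (q + (if sigma then v1 else 0) + v2)
  * (jpow a v1 ^ 2 * jpow a v2 ^ 2).
Proof.
  intros Ha.
  set (w := if sigma then v1 else 0).
  pose proof (jpow_peetre a q v1 Ha) as P1.
  pose proof (jpow_peetre a q (w + v2) Ha) as P2.
  rewrite <- Rplus_assoc in P2.
  pose proof (jpow_peetre a (w + v2) (- v2) Ha) as P3.
  replace (w + v2 + - v2) with w in P3 by ring. rewrite jpow_opp in P3.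
  assert (Hw : jpow a w <= jpow a v1).
  { unfold w; destruct sigma; [lra |]. rewrite jpow_0. apply jpow_ge1; lra. }
  pose proof (jpow_ge1 a v1 (proj1 Ha)). pose proof (jpow_ge1 a v2 (proj1 Ha)).
  pose proof (jpow_ge1 a q (proj1 Ha)). pose proof (jpow_ge1 a (q + v1) (proj1 Ha)).
  pose proof (jpow_ge1 a (q + w + v2) (proj1 Ha)).
  set (Q := jpow a q) in *. set (A := jpow a v1) in *. set (B := jpow a v2) in *.
  set (X1 := jpow a (q + v1)) in *. set (X2 := jpow a (q + w + v2)) in *.
  set (Y := jpow a (w + v2)) in *.
  assert (HY : Y <= 2 * A * B).
  { eapply Rle_trans; [exact P3 |]. apply Rmult_le_compat_r; lra. }
  assert (HQ2 : Q <= 4 * X2 * A * B).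
  { eapply Rle_trans; [exact P2 |].
    replace (4 * X2 * A * B) with (2 * X2 * (2 * A * B)) by ring.
    apply Rmult_le_compat_l; lra. }
  assert (HQQ : Q * Q <= (2 * X1 * A) * (4 * X2 * A * B)) by (apply Rmult_le_compat; lra).
  assert (0 <= X1 * X2 * A * A) by (repeat apply Rmult_le_pos; lra).
  nra.
Qed.

Lemma Rinv_mult_le_of_le x y z m : 0 < x -> 0 < y -> 0 < z ->
  z <= m * (x * y) -> / x * / y <= m * / z.
Proof.
  intros Hx Hy Hz Hle.
  replace (/ x * / y) with (z * / (x * y * z)) by (field; lra).
  replace (m * / z) with (m * (x * y) * / (x * y * z)) by (field; lra).
  apply Rmult_le_compat_r; [left; apply Rinv_0_lt_compat | exact Hle].
  repeat apply Rmult_lt_0_compat; lra.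
Qed.

Lemma jbr_weight_coord_le a q v1 v2 (sigma : bool) : 0 <= a <= 1 ->
  Rpower (jbr v1) (- (2 * a)) * Rpower (jbr v2) (- (2 * a)) <=
  8 * jpow a (q + v1) * jpow a (q + (if sigma then v1 else 0) + v2)
  * Rpower (jbr q) (- (2 * a)).
Proof.
  intros Ha. rewrite !Rpower_jbr_neg.
  apply Rinv_mult_le_of_le; try (apply pow_lt, jpow_pos).
  apply jpow_sqr_coord_le, Ha.
Qed.

Lemma weight_prod_le d a (sigma : bool) (q v1 v2 : nat -> R) : 0 <= a <= 1 ->
  prodR d (fun j => Rpower (jbr (v1 j)) (- (2 * a)) * Rpower (jbr (v2 j)) (- (2 * a)))
  <= 8 ^ d * (prodR d (fun j => jpow a (vadd q v1 j))
              * prodR d (fun j => jpow a (vadd (vadd q (vsig sigma v1)) v2 j)))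
     * prodR d (fun j => Rpower (jbr (q j)) (- (2 * a))).
Proof.
  intros Ha.
  eapply Rle_trans.
  { apply prodR_le. intros j _. split.
    - apply Rmult_le_pos; left; apply exp_pos.
    - apply (jbr_weight_coord_le a (q j) (v1 j) (v2 j) sigma Ha). }
  rewrite !prodR_mul, prodR_const. right. unfold vadd, vsig. ring.
Qed.

Lemma prodR_jpow_le d a p : 0 <= a -> INR d * a <= 2 ->
  prodR d (fun j => jpow a (p j)) <= 1 + 2 * nu d p.
Proof.
  intros Ha Hda.
  assert (Hsq : forall j, 0 <= p j ^ 2) by (intros; apply pow2_ge_0).
  assert (HS : 1 + 2 * nu d p = 1 + sumR d (fun j => p j ^ 2)) by (unfold nu; field).
  pose proof (sumR_nonneg d _ Hsq) as Hsum.
  set (r := sqrt (1 + 2 * nu d p)).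
  assert (Hr : 1 <= r).
  { unfold r. rewrite <- sqrt_1 at 1. apply sqrt_le_1_alt. lra. }
  apply Rle_trans with (prodR d (fun _ => Rpower r a)).
  { apply prodR_le. intros j Hj. split; [left; apply jpow_pos |].
    pose proof (jbr_ge1 (p j)). pose proof (sumR_ge_term d _ j Hsq Hj).
    unfold jpow. apply Rle_Rpower_l; [lra | split; [lra |]].
    unfold jbr, r. apply sqrt_le_1_alt. lra. }
  rewrite prodR_const, <- Rpower_pow by apply exp_pos. rewrite Rpower_mult.
  apply Rle_trans with (Rpower r (INR 2)).
  { apply Rle_Rpower; [lra | rewrite Rmult_comm; simpl; lra]. }
  rewrite Rpower_pow by lra. unfold r. rewrite pow2_sqrt; lra.
Qed.

Lemma weight_resolvent_le d a p E eta s :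
  0 <= a -> INR d * a <= 2 -> 0 <= 1 + 2 * E -> 0 < eta ->
  prodR d (fun j => jpow a (p j)) * / Cmod (shiftC (nu d p) E eta s)
  <= (3 + 2 * E) * (1 + / eta).
Proof.
  intros Ha Hda HE Heta.
  eapply Rle_trans; [| apply (resolvent_le (nu d p) E eta s HE Heta)].
  apply Rmult_le_compat_r; [left; apply Rinv_Cmod_shiftC_pos, Heta |].
  apply prodR_jpow_le; assumption.
Qed.

Lemma two_resolvents_le d a p1 p2 E eta s :
  0 <= a -> INR d * a <= 2 -> 0 <= 1 + 2 * E -> 0 < eta ->
  prodR d (fun j => jpow a (p1 j)) * prodR d (fun j => jpow a (p2 j))
  * (/ Cmod (shiftC (nu d p1) E eta s) * / Cmod (shiftC (nu d p2) E eta s))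
  <= 2 * (3 + 2 * E) ^ 2 * (1 + / eta ^ 2).
Proof.
  intros Ha Hda HE Heta.
  pose proof (weight_resolvent_le d a p1 E eta s Ha Hda HE Heta) as Z1.
  pose proof (weight_resolvent_le d a p2 E eta s Ha Hda HE Heta) as Z2.
  assert (Hnonneg : forall p, 0 <= prodR d (fun j => jpow a (p j))
                                 * / Cmod (shiftC (nu d p) E eta s)).
  { intros p. apply Rmult_le_pos; [apply prodR_nonneg; intros; left; apply jpow_pos |].
    left; apply Rinv_Cmod_shiftC_pos, Heta. }
  apply Rle_trans with (((3 + 2 * E) * (1 + / eta)) ^ 2).
  { replace (((3 + 2 * E) * (1 + / eta)) ^ 2)
      with ((3 + 2 * E) * (1 + / eta) * ((3 + 2 * E) * (1 + / eta))) by ring.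
    eapply Rle_trans; [right | apply Rmult_le_compat; [apply Hnonneg .. | exact Z1 | exact Z2]].
    ring. }
  assert (Hinv : / eta ^ 2 = / eta * / eta) by (field; lra).
  pose proof (pow2_ge_0 (1 - / eta)). pose proof (pow2_ge_0 (3 + 2 * E)).
  rewrite Hinv. nra.
Qed.

Theorem lemma23 (d : nat) (eps : R) :
  (d <= 3)%nat -> 0 < eps <= 1 ->
  exists K : R -> R,
    (* E |-> K E is bounded on compact subsets of (0, oo) *)
    (forall a b, 0 < a -> a <= b ->
       exists M, forall E, a <= E <= b -> Rabs (K E) <= M) /\
    (forall (E : R), 0 < E ->
     forall (sigma : bool) (eta : R), 0 < eta ->
     forall (q : nat -> R) (s : bool),
     (* the supremum over v1, v2 is bounded by the right-hand side *)
     forall v1 v2 : nat -> R,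
       prodR d (fun j => Rpower (jbr (v1 j)) (-1 + eps)
                         * Rpower (jbr (v2 j)) (-1 + eps))
       * / Cmod (shiftC (nu d (vadd q v1)) E eta s)
       * / Cmod (shiftC (nu d (vadd (vadd q (vsig sigma v1)) v2)) E eta s)
       <= K E * (1 + / eta ^ 2) * prodR d (fun j => Rpower (jbr (q j)) (-1 + eps))).
Proof.
  intros Hd Heps.
  exists (fun E => 1024 * (3 + 2 * E) ^ 2). split.
  { intros a b Ha Hab. exists (1024 * (3 + 2 * b) ^ 2). intros E HE.
    rewrite Rabs_pos_eq by (apply Rmult_le_pos; [lra | apply pow2_ge_0]).
    apply Rmult_le_compat_l; [lra | apply pow_incr; lra]. }
  intros E HE sigma eta Heta q s v1 v2.
  set (a := (1 - eps) / 2).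
  assert (Ha : 0 <= a <= 1) by (unfold a; lra).
  assert (Hda : INR d * a <= 2) by (apply le_INR in Hd; simpl in Hd; unfold a; nra).
  replace (-1 + eps) with (- (2 * a)) by (unfold a; field).
  rewrite Rmult_assoc.
  pose proof (weight_prod_le d a sigma q v1 v2 Ha) as Hprod.
  set (p1 := vadd q v1) in *. set (p2 := vadd (vadd q (vsig sigma v1)) v2) in *.
  pose proof (two_resolvents_le d a p1 p2 E eta s (proj1 Ha) Hda ltac:(lra) Heta) as Hres.
  set (G := prodR d (fun j => jpow a (p1 j)) * prodR d (fun j => jpow a (p2 j))) in *.
  set (I := / Cmod (shiftC (nu d p1) E eta s) * / Cmod (shiftC (nu d p2) E eta s)) in *.
  set (Q := prodR d (fun j => Rpower (jbr (q j)) (- (2 * a)))) in *.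
  assert (HI : 0 <= I)
    by (apply Rmult_le_pos; left; apply Rinv_Cmod_shiftC_pos, Heta).
  assert (HQ : 0 <= Q) by (apply prodR_nonneg; intros; left; apply exp_pos).
  assert (H8 : 8 ^ d <= 512).
  { replace 512 with (8 ^ 3) by ring. apply Rle_pow; [lra | exact Hd]. }
  apply Rle_trans with (8 ^ d * Q * (G * I)).
  { eapply Rle_trans; [apply Rmult_le_compat_r; [exact HI | exact Hprod] | right; ring]. }
  replace (1024 * (3 + 2 * E) ^ 2 * (1 + / eta ^ 2) * Q)
    with (512 * Q * (2 * (3 + 2 * E) ^ 2 * (1 + / eta ^ 2))) by ring.
  apply Rmult_le_compat; [| | apply Rmult_le_compat_r | exact Hres]; try lra.
  - apply Rmult_le_pos; [apply pow_le |]; lra.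
  - apply Rmult_le_pos; [| exact HI].
    apply Rmult_le_pos; apply prodR_nonneg; intros; left; apply jpow_pos.
Qed.
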